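(* Consider a run of the algorithm described in the context, and assume the event $\mathcal E$ occurs. Let $j$ be an iteration of the run and let $\mathcal V_{(j)}$ be the value of $\mathcal V$ at the start of iteration $j$. For a family $f$ define \[S_j^{\neg}(f):=\max\{\mathcal S(E): E\in\mathcal E_{d,k},\ E^{(j)}\neq\emptyset,\ f\notin U(E^{(j)})\}.\] Suppose that for some $f\in U(\mathcal G_j^* )\cap\mathcal F_{\mathrm{act}}(\mathcal V_{(j)})$ we have $S_j^\neg(f)<\mathcal S^*-2\theta_j$, where $\mathcal G_j^*=\{G\in\mathcal G_j:\mathcal S(G)=\mathcal S^*\}$. Then some family is accepted by the algorithm at iteration $j$.
   Context: Setting. $\mathbf{X}=(X_1,\dots,X_d)$ is a random vector; $k$ a fixed positive integer; natural logarithms. A family is $f=\langle X_i,\Pi\rangle$ with $\Pi\subseteq\{X_1,\dots,X_d\}\setminus\{X_i\}$, $|\Pi|\le k$; $\mathcal F_{d,k}$ the set of families; $H(f)=H(X_i\mid\Pi)$. $\mathcal G_{d,k}$ = DAGs over the variables with in-degree $\le k$, identified with their family sets; $\mathcal S(F)=-\sum_{f\in F}H(f)$; $\mathcal S^*=\max_{G\in\mathcal G_{d,k}}\mathcal S(G)$. $\mathcal E_{d,k}$ is the set of Markov equivalence classes (ECs) on $\mathcal G_{d,k}$; graphs in an EC $E$ share a score $\mathcal S(E)$. Each sample is an independent copy of $\mathbf X$ of which only a chosen set of $k+1$ coordinates is revealed. $\hat H$ is an estimator of $H(f)$ from the samples where all variables of $f$ were observed, and $N(\epsilon,\delta)$ is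 such that for any fixed $f$, at least $N(\epsilon,\delta)$ such samples give $|\hat H(f)-H(f)|\le\epsilon$ with probability $\ge1-\delta$. Notation: $\mathcal F_{\mathrm{act}}(\mathcal V)$ = families whose child is not in $\mathcal V\subseteq[d]$; $\mathcal G_j=\{G\in\mathcal G_{d,k}:\mathcal A_j\subseteq G\}$; $E^{(j)}=E\cap\mathcal G_j$; $U(\mathcal A)=\bigcup_{G\in\mathcal A}G$; $\hat H_t(f)$ = estimate from all samples up to round $t$; $\hat{\mathcal S}_t(G)=-\sum_{f\in G}\hat H_t(f)$; $\hat{\mathcal S}_t(\mathcal A)=\max_{G\in\mathcal A}\hat{\mathcal S}_t(G)$. Algorithm (inputs $d,k,\delta\in(0,1),\epsilon,\epsilon_1>0$). Initialize $\mathcal A_1=\emptyset,\mathcal V=\emptyset,N_0=0,t=1,j=1,T=\lceil\log_2(2d\epsilon_1/\epsilon)\rceil$. While $\epsilon_t>\epsilon/(d-|\mathcal V|)$ (a ''round'' $t$): $N_t=N(\epsilon_t/2,\delta/(T|\mathcal F_{\mathrm{act}}(\mathcal V)|))$; observe each $(k+1)$-subset of $[d]$ not contained in $\mathcal V$ in $N_t-N_{t-1}$ new samples; repeat the following ''iteration'' until $\mathcal A_j=\mathcal A_{j-1}$: $\theta_j=(d-|\mathcal V|)\epsilon_t$; $\hat G_j\in\arg\max_{G\in\mathcal G_j}\hat{\mathcal S}_t(G)$, $\hat E_j$ its EC; $L_j=\{E\in\mathcal E_{d,k}:E^{(j)}\neq\emptyset,\hat{\mathcal S}_t(\hat E_j^{(j)})-\hat{\mathcal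 S}_t(E^{(j)})\le\theta_j\}$; if some $f\in U(\hat E_j^{(j)})\cap\mathcal F_{\mathrm{act}}(\mathcal V)$ satisfies $f\in U(E^{(j)})$ for all $E\in L_j$, accept one such $f=\langle X_v,\Pi\rangle$: $\mathcal V\leftarrow\mathcal V\cup\{v\}$, $\mathcal A_{j+1}=\mathcal A_j\cup\{f\}$; else $\mathcal A_{j+1}=\mathcal A_j$; $j\leftarrow j+1$. After the iterations, if $|\mathcal V|=d$ return $\mathcal A_j$; else $t\leftarrow t+1$, $\epsilon_t=\epsilon_{t-1}/2$. After the while loop: $\epsilon_{\mathrm{last}}=\epsilon/(d-|\mathcal V|)$, $N_T=N(\epsilon_{\mathrm{last}}/2,\delta/(T|\mathcal F_{\mathrm{act}}(\mathcal V)|))$, observe remaining subsets in $N_T-N_{T-1}$ more samples, return a maximizer of $\hat{\mathcal S}_T$ over $\mathcal G_j$. Event: with $\mathcal V_t$ the value of $\mathcal V$ at the start of round $t$, $\mathcal E:=\{\forall t\in[T],\forall f\in\mathcal F_{\mathrm{act}}(\mathcal V_t): |\hat H_t(f)-H(f)|\le\epsilon_t/2\}$. *)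

From mathcomp Require Import all_boot all_order all_algebra.
From mathcomp Require Import boolp.
Set Implicit Arguments. Unset Strict Implicit. Unset Printing Implicit Defensive.
Import Order.TTheory GRing.Theory Num.Theory.
Local Open Scope ring_scope.

(* Variables X_1..X_d are indexed by 'I_d.  A (candidate) family <X_i, Pi>
   is a pair (i, Pi). *)
Definition fam (d : nat) : finType := ('I_d * {set 'I_d})%type.

Section Defs.
Variables (d k : nat).
Local Notation fam := (fam d).

Definition is_family (f : fam) : bool := (f.1 \notin f.2) && (#|f.2| <= k)%N.

Definition edge (G : {set fam}) : rel 'I_d :=
  fun x y => [exists P : {set 'I_d}, ((y, P) \in G) && (x \in P)].

Definition is_dag (G : {set fam}) : bool :=
  [forall f in G, is_family f] &&
  [forall i : 'I_d, #|[set f in G | f.1 == i]| == 1%N] &&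
  [forall x : 'I_d, forall y : 'I_d, edge G x y ==> ~~ connect (edge G) y x].

Definition dags : {set {set fam}} := [set G | is_dag G].

Definition adj (G : {set fam}) : rel 'I_d := fun a b => edge G a b || edge G b a.

Definition active_trail (G : {set fam}) (Z : {set 'I_d}) (x : 'I_d) (r : seq 'I_d)
  : bool :=
  let s := x :: r in
  [&& uniq s, path (adj G) x r &
   [forall i : 'I_(size r), (0 < i)%N ==>
      (let a := nth x s i.-1 in let b := nth x s i in let c := nth x s i.+1 in
       if edge G a b && edge G c b
       then [exists z in Z, connect (edge G) b z]
       else b \notin Z)]].

Definition d_connected (G : {set fam}) (x y : 'I_d) (Z : {set 'I_d}) : Prop :=
  exists r : seq 'I_d, active_trail G Z x r /\ last x r = y.

Definition markov_equiv (G G' : {set fam}) : Prop :=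
  forall (x y : 'I_d) (Z : {set 'I_d}), x != y -> x \notin Z -> y \notin Z ->
    (d_connected G x y Z <-> d_connected G' x y Z).

Definition ec (G : {set fam}) : {set {set fam}} :=
  [set G' | is_dag G' & `[< markov_equiv G G' >]].

Definition ecs : {set {set {set fam}}} := [set ec G | G in dags].

Definition Uf (S : {set {set fam}}) : {set fam} := \bigcup_(G in S) G.

Definition Fact_act (V : {set 'I_d}) : {set fam} :=
  [set f : fam | is_family f & f.1 \notin V].

(* set of children of a set of families (= the set V of the algorithm) *)
Definition Vof (A : {set fam}) : {set 'I_d} := [set f.1 | f in A].

Definition Gof (A : {set fam}) : {set {set fam}} := [set G in dags | A \subset G].

Variable R : realFieldType.

(* maximum of F over a (nonempty) finite set S; 0 on the empty set (never used) *)
Definition smax (T : finType) (S : {set T}) (F : T -> R) : R :=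
  if [pick x in S] is Some x0 then \big[Num.max/F x0]_(x in S) F x else 0.

Definition score (h : fam -> R) (G : {set fam}) : R := - \sum_(f in G) h f.

(* S(E) (graphs in an EC share a score; maximum over the class) *)
Definition scoreE (h : fam -> R) (E : {set {set fam}}) : R := smax E (score h).

Definition Sstar (h : fam -> R) : R := smax dags (score h).

Definition Gstar (h : fam -> R) (A : {set fam}) : {set {set fam}} :=
  [set G in Gof A | score h G == Sstar h].

Variables (eps eps1 : R).

Definition eps_t (t : nat) : R := eps1 / 2 ^+ t.-1.

Definition theta (t : nat) (A : {set fam}) : R := (d - #|Vof A|)%:R * eps_t t.

Definition is_argmax (hh : fam -> R) (A : {set fam}) (Ghat : {set fam}) : Prop :=
  Ghat \in Gof A /\ forall G, G \in Gof A -> score hh G <= score hh Ghat.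

Definition acceptable (hh : fam -> R) (th : R) (A : {set fam}) (Ghat : {set fam})
  (f : fam) : Prop :=
  let EhatJ := ec Ghat :&: Gof A in
  f \in Uf EhatJ /\ f \in Fact_act (Vof A) /\
  forall E, E \in ecs -> E :&: Gof A != set0 ->
    smax EhatJ (score hh) - smax (E :&: Gof A) (score hh) <= th ->
    f \in Uf (E :&: Gof A).

Definition step (hh : fam -> R) (th : R) (A A' : {set fam}) : Prop :=
  exists Ghat, is_argmax hh A Ghat /\
    ((exists f, acceptable hh th A Ghat f /\ A' = f |: A) \/
     ((forall f, ~ acceptable hh th A Ghat f) /\ A' = A)).

Variable Hhat : nat -> fam -> R.

(* reach t A0 A : in some run, there is an iteration of round t which
   starts with accepted set A_j = A, the round having started with A0
   (so V_t = Vof A0 and V_(j) = Vof A). *)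
Inductive reach : nat -> {set fam} -> {set fam} -> Prop :=
| reach_start : eps / d%:R < eps_t 1 -> reach 1 set0 set0
| reach_iter t A0 A A' : reach t A0 A -> step (Hhat t) (theta t A) A A' ->
    A' != A -> reach t A0 A'
| reach_round t A0 A : reach t A0 A -> step (Hhat t) (theta t A) A A ->
    (#|Vof A| < d)%N -> eps / (d - #|Vof A|)%:R < eps_t t.+1 ->
    reach t.+1 A A.

Definition event (H : fam -> R) : Prop :=
  forall t A0 A, reach t A0 A ->
    forall f, f \in Fact_act (Vof A0) -> `|Hhat t f - H f| <= eps_t t / 2.

End Defs.

From mathcomp Require Import all_boot all_order all_algebra.
From mathcomp Require Import boolp.
From mathcomp Require Import lra.
Import Order.TTheory GRing.Theory Num.Theory.
Local Open Scope ring_scope.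
Set Implicit Arguments. Unset Strict Implicit.

(* All graphs of G_j contain A_j, so two of them differ on at most d - |V|
   active families, each estimated within eps_t / 2 under the event: estimated
   score gaps inside G_j are the true gaps up to theta_j.  An optimal graph of
   G_j beats every class whose restriction misses f by more than 2 theta_j, so
   the estimated maximizer beats it by more than theta_j.  Hence no such class
   lies in L_j, and since the class of the estimated maximizer lies in L_j, it
   contains f in its restriction: f is accepted. *)

Section SetMax.
Variables (R : realFieldType) (T : finType) (S : {set T}) (F : T -> R).

Lemma le_smax x : x \in S -> F x <= smax S F.
Proof.
move=> Sx; rewrite /smax; case: pickP => [x0 _|S0]; last by have := S0 x; rewrite Sx.
by rewrite (bigD1 x) //= le_max lexx.
Qed.

Lemma smax_attained : S != set0 -> exists2 x, x \in S & smax S F = F x.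
Proof.
move=> SN0; rewrite /smax; case: pickP => [x0 Sx0|S0]; last first.
  by case/set0Pn: SN0 => x; rewrite S0.
apply: (big_ind (fun v => exists2 x, x \in S & v = F x)); first by exists x0.
  by move=> a b [xa Sa ->] [xb Sb ->]; case: leP => _; [exists xb | exists xa].
by move=> x Sx; exists x.
Qed.

End SetMax.

Lemma reach_subset (R : realFieldType) d k (eps eps1 : R) (Hhat : nat -> fam d -> R)
    t (A0 A : {set fam d}) :
  reach k eps eps1 Hhat t A0 A -> A0 \subset A.
Proof.
elim=> // {}t {}A0 {}A A' _ A0A [Gh [_ [[g [_ ->]]|[_ ->]]]] A'A.
  exact: subset_trans A0A (subsetUr _ _).
by rewrite eqxx in A'A.
Qed.

Section Families.
Variables (d k : nat).
Implicit Types (A G : {set fam d}) (g : fam d).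

Lemma mem_ec_dag G : is_dag k G -> G \in ec k G.
Proof. by move=> dagG; rewrite inE dagG; apply/asboolP. Qed.

Lemma dag_child_inj G : is_dag k G -> {in G &, injective (fun g : fam d => g.1)}.
Proof.
case/andP => /andP [_ /forallP one_fam] _ g1 g2 Gg1 Gg2 eq_child.
have /cards1P [g0 Eg0] := one_fam g1.1.
have : g1 \in [set g in G | g.1 == g1.1] by rewrite inE Gg1 eqxx.
have : g2 \in [set g in G | g.1 == g1.1] by rewrite inE Gg2 eq_child eqxx.
by rewrite Eg0 !inE => /eqP -> /eqP ->.
Qed.

Lemma Fact_act_Gof_diff A G g :
  G \in Gof k A -> g \in G :\: A -> g \in Fact_act k (Vof A).
Proof.
rewrite inE => /andP [dagG AG] /setDP [Gg Ag]; rewrite inE in dagG.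
rewrite inE; apply/andP; split.
  by case/andP: dagG => /andP [/forall_inP fams _] _; exact: fams.
apply/imsetP => -[a Aa eq_child].
have Ga : a \in G := subsetP AG a Aa.
by rewrite (dag_child_inj dagG Gg Ga eq_child) Aa in Ag.
Qed.

Lemma card_Gof_diff A G : G \in Gof k A -> (#|G :\: A| <= d - #|Vof A|)%N.
Proof.
move=> GA; have dagG : is_dag k G by move: GA; rewrite !inE => /andP [].
have inj_child : {in G :\: A &, injective (fun g : fam d => g.1)}.
  by move=> g1 g2 /setDP [G1 _] /setDP [G2 _]; exact: (dag_child_inj dagG).
rewrite -(card_in_imset inj_child).
have -> : (d - #|Vof A| = #|~: Vof A|)%N by rewrite [RHS]cardsCs setCK card_ord.
apply/subset_leq_card/subsetP => _ /imsetP [g Gg ->].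
by have := Fact_act_Gof_diff GA Gg; rewrite !inE => /andP [].
Qed.

Variable R : realFieldType.
Implicit Types (h hh H : fam d -> R).

Lemma score_subset h A G :
  A \subset G -> score h G = - (\sum_(g in A) h g + \sum_(g in G :\: A) h g).
Proof. by move=> AG; rewrite /score (big_setID A) /= (setIidPr AG). Qed.

Lemma norm_sum_Gof_diff A G (e : fam d -> R) c : G \in Gof k A ->
  (forall g, g \in Fact_act k (Vof A) -> `|e g| <= c) -> 0 <= c ->
  `|\sum_(g in G :\: A) e g| <= (d - #|Vof A|)%:R * c.
Proof.
move=> GA e_le c_ge0; apply: le_trans (ler_norm_sum _ _ _) _.
apply: le_trans (_ : \sum_(g in G :\: A) c <= _).
  by apply: ler_sum => g Gg; apply/e_le/(Fact_act_Gof_diff GA).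
rewrite sumr_const -(mulr_natl c) ler_wpM2r //.
by rewrite ler_nat card_Gof_diff.
Qed.

Lemma score_gap_estimate hh H A G G' c : G \in Gof k A -> G' \in Gof k A ->
  (forall g, g \in Fact_act k (Vof A) -> `|hh g - H g| <= c / 2) -> 0 <= c ->
  score H G - score H G' - (d - #|Vof A|)%:R * c <= score hh G - score hh G'.
Proof.
move=> GA G'A err c_ge0.
have AG : A \subset G by move: GA; rewrite inE => /andP [].
have AG' : A \subset G' by move: G'A; rewrite inE => /andP [].
have c2_ge0 : 0 <= c / 2 by rewrite divr_ge0.
have := norm_sum_Gof_diff GA err c2_ge0.
have := norm_sum_Gof_diff G'A err c2_ge0.
rewrite !sumrB !ler_norml !(score_subset _ AG) !(score_subset _ AG') mulrA.
set n := (d - #|Vof A|)%:R; lra.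
Qed.

Lemma acceptable_of_gap hh th A Ghat g :
  Ghat \in Gof k A -> g \in Fact_act k (Vof A) -> 0 <= th ->
  (forall E, E \in ecs d k -> E :&: Gof k A != set0 -> g \notin Uf (E :&: Gof k A) ->
     th < smax (ec k Ghat :&: Gof k A) (score hh) - smax (E :&: Gof k A) (score hh)) ->
  acceptable k hh th A Ghat g.
Proof.
move=> GhatA g_act th_ge0 gap.
have dagGhat : is_dag k Ghat by move: GhatA; rewrite !inE => /andP [].
have Ehat_ec : ec k Ghat \in ecs d k by apply/imsetP; exists Ghat; rewrite ?inE.
have EhatN0 : ec k Ghat :&: Gof k A != set0.
  by apply/set0Pn; exists Ghat; rewrite inE mem_ec_dag.
split; last split=> // [E E_ec EN0 le_th].
  by apply/negPn/negP => /(gap _ Ehat_ec EhatN0); rewrite subrr; lra.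
by apply/negPn/negP => /(gap _ E_ec EN0); lra.
Qed.

Lemma estimated_gap hh H A Ghat Gs E c :
  is_argmax k hh A Ghat -> Gs \in Gof k A -> E :&: Gof k A != set0 ->
  (forall g, g \in Fact_act k (Vof A) -> `|hh g - H g| <= c / 2) -> 0 <= c ->
  scoreE H E < score H Gs - 2 * ((d - #|Vof A|)%:R * c) ->
  (d - #|Vof A|)%:R * c
    < smax (ec k Ghat :&: Gof k A) (score hh) - smax (E :&: Gof k A) (score hh).
Proof.
move=> [GhatA Ghat_max] GsA EN0 err c_ge0 Gs_beats_E.
have [GE /setIP [EGE GEA] ->] := smax_attained (score hh) EN0.
have dagGhat : is_dag k Ghat by move: GhatA; rewrite !inE => /andP [].
have GhatEhat : Ghat \in ec k Ghat :&: Gof k A by rewrite inE mem_ec_dag.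
have := le_smax (score hh) GhatEhat; have := Ghat_max _ GsA; have := le_smax (score H) EGE.
have := score_gap_estimate GsA GEA err c_ge0.
rewrite /scoreE in Gs_beats_E; lra.
Qed.

End Families.

Theorem lemma3 (R : realFieldType) (d k : nat) (eps eps1 : R)
  (H : fam d -> R) (Hhat : nat -> fam d -> R)
  (Hscore_eq : forall G G' : {set fam d}, is_dag k G -> is_dag k G' ->
     markov_equiv G G' -> score H G = score H G')
  (Heps : 0 < eps) (Heps1 : 0 < eps1)
  (Hevent : event k eps eps1 Hhat H)
  (t : nat) (A0 A : {set fam d})
  (Hreach : reach k eps eps1 Hhat t A0 A)
  (f : fam d)
  (Hf : f \in Uf (Gstar k H A) :&: Fact_act k (Vof A))
  (Hneg : forall E, E \in ecs d k -> E :&: Gof k A != set0 ->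
     f \notin Uf (E :&: Gof k A) ->
     scoreE H E < Sstar k H - 2 * theta eps1 t A) :
  forall Ghat, is_argmax k (Hhat t) A Ghat ->
    exists g, acceptable k (Hhat t) (theta eps1 t A) A Ghat g.
Proof.
move=> Ghat Ghat_max; exists f.
have eps_t_ge0 : 0 <= eps_t eps1 t by rewrite divr_ge0 ?exprn_ge0 ?ltW.
have err g : g \in Fact_act k (Vof A) -> `|Hhat t g - H g| <= eps_t eps1 t / 2.
  rewrite !inE => /andP [fam_g gA]; apply: (Hevent t A0 A Hreach).
  rewrite !inE fam_g; apply: contra gA.
  exact/subsetP/imsetS/(reach_subset Hreach).
case/setIP: Hf => /bigcupP [Gs /setIdP [GsA /eqP Gs_opt] _] f_act.
have GhatA : Ghat \in Gof k A by case: Ghat_max.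
have theta_ge0 : 0 <= theta eps1 t A by rewrite mulr_ge0.
apply: acceptable_of_gap GhatA f_act theta_ge0 _ => E E_ec EN0 f_notin.
apply: (estimated_gap Ghat_max GsA EN0 err eps_t_ge0).
by rewrite Gs_opt; apply: Hneg E_ec EN0 f_notin.
Qed.
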